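(* Let $D$ be an integral domain, $S$ a multiplicative subset of $D$, and $M$ a torsion-free unitary $D$-module. Then: (1) If $M$ is an $S$-Noetherian module, then $M$ is a locally $S$-Noetherian module. (2) If $M$ is a locally $S$-Noetherian module which has finite character, then $M$ is an $S$-Noetherian module.
   Context: A submodule $L$ of $M$ is $S$-finite if there exist $s\in S$ and a finitely generated submodule $F$ of $M$ with $Ls\subseteq F\subseteq L$; $M$ is $S$-Noetherian if every submodule is $S$-finite. $M$ is locally $S$-Noetherian if for each maximal ideal $\mathfrak{m}$ of $D$, $M_{\mathfrak{m}}$ is an $S$-Noetherian $D_{\mathfrak{m}}$-module (with $S$ viewed inside $D_{\mathfrak{m}}$). For a submodule $L$, $(L:M)=\{d\in D\mid Md\subseteq L\}$. $M$ has finite character if for each nonzero $a\in M$ with $(aD:M)\neq D$, the ideal $(aD:M)$ is contained in only finitely many maximal ideals of $D$. *)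

From HB Require Import structures.
From Stdlib Require List.
From mathcomp Require Import all_boot all_order all_algebra.
Set Implicit Arguments. Unset Strict Implicit. Unset Printing Implicit Defensive.
Import GRing.Theory.
Local Open Scope ring_scope.

Section Defs.
Variables (D : idomainType) (M : lmodType D).

Definition multiplicative (S : D -> Prop) : Prop :=
  S 1 /\ forall a b, S a -> S b -> S (a * b).

Definition torsion_free : Prop :=
  forall (d : D) (x : M), d *: x = 0 -> d = 0 \/ x = 0.

Definition is_ideal (I : D -> Prop) : Prop :=
  [/\ I 0, (forall a b, I a -> I b -> I (a + b)) & (forall r a, I a -> I (r * a))].

Definition maximal_ideal (m : D -> Prop) : Prop :=
  [/\ is_ideal m, ~ m 1 &
      forall J, is_ideal J -> (forall x, m x -> J x) -> ~ J 1 ->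
        forall x, J x -> m x].

Definition submodule (L : M -> Prop) : Prop :=
  [/\ L 0, (forall x y, L x -> L y -> L (x + y)) & (forall (a : D) x, L x -> L (a *: x))].

Definition in_span (gs : seq M) (x : M) : Prop :=
  exists cs : seq D, size cs = size gs /\
    x = \sum_(p <- zip cs gs) p.1 *: p.2.

Definition S_finite (S : D -> Prop) (L : M -> Prop) : Prop :=
  exists s, S s /\ exists gs : seq M, (forall g, List.In g gs -> L g) /\
    forall x, L x -> in_span gs (s *: x).

Definition S_Noetherian (S : D -> Prop) : Prop :=
  forall L, submodule L -> S_finite S L.

(** Localization M_m at a maximal (prime) ideal m: elements are fractions
    x/s, encoded as pairs (x, s) with s ∉ m, modulo the usual relation. *)
Definition frac_eq (m : D -> Prop) (p q : M * D) : Prop :=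
  exists u, ~ m u /\ u *: (q.2 *: p.1 - p.2 *: q.1) = 0.

Definition fadd (p q : M * D) : M * D := (q.2 *: p.1 + p.2 *: q.1, p.2 * q.2).
(** action of the element a/u of D_m on x/s *)
Definition fscale (a u : D) (p : M * D) : M * D := (a *: p.1, u * p.2).
Definition fzero : M * D := (0, 1).
Definition fsum (l : seq (M * D)) : M * D := foldr fadd fzero l.

(** D_m-submodules of M_m, represented as sets of fraction representatives
    (closed under the fraction equivalence) *)
Definition loc_submodule (m : D -> Prop) (N : M * D -> Prop) : Prop :=
  [/\ forall p, N p -> ~ m p.2,
      forall p q, N p -> ~ m q.2 -> frac_eq m p q -> N q,
      N fzero,
      forall p q, N p -> N q -> N (fadd p q) &
      forall a u p, ~ m u -> N p -> N (fscale a u p)].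

Definition loc_in_span (m : D -> Prop) (gs : seq (M * D)) (p : M * D) : Prop :=
  exists cs : seq (D * D), size cs = size gs /\
    (forall c, List.In c cs -> ~ m c.2) /\
    frac_eq m p (fsum [seq fscale cg.1.1 cg.1.2 cg.2 | cg <- zip cs gs]).

(** S-finiteness in M_m, where s ∈ S acts as s/1 ∈ D_m *)
Definition loc_S_finite (S : D -> Prop) (m : D -> Prop) (N : M * D -> Prop) : Prop :=
  exists s, S s /\ exists gs : seq (M * D), (forall g, List.In g gs -> N g) /\
    forall p, N p -> loc_in_span m gs (fscale s 1 p).

Definition loc_S_Noetherian (S : D -> Prop) (m : D -> Prop) : Prop :=
  forall N, loc_submodule m N -> loc_S_finite S m N.

Definition locally_S_Noetherian (S : D -> Prop) : Prop :=
  forall m, maximal_ideal m -> loc_S_Noetherian S m.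

Definition colon_cyclic (a : M) (d : D) : Prop :=
  forall y : M, exists e : D, d *: y = e *: a.

Definition finite_character : Prop :=
  forall a : M, a != 0 -> (exists d, ~ colon_cyclic a d) ->
    exists l : seq (D -> Prop), forall m, maximal_ideal m ->
      (forall d, colon_cyclic a d -> m d) ->
      exists I, List.In I l /\ forall d, m d <-> I d.

End Defs.

From Pilot Require Import Defs.
From mathcomp Require Import all_boot all_order all_algebra.
From mathcomp Require Import boolp classical_sets.
From mathcomp Require Import ring.

(* (1) If s L ⊆ F ⊆ L with F finitely generated, for the contraction
   L = {x | x/1 ∈ N} of a submodule N of M_m, then s N ⊆ F_m ⊆ N.
   (2) Given a submodule L and 0 ≠ b ∈ L, finite character leaves only finitely
   many maximal ideals m_1, ..., m_k containing (bD : M).  Localizing L at each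
   m_i yields s_i ∈ S and finitely many elements of L whose span contains
   t_i s_i x, for some t_i ∉ m_i, for every x ∈ L.  With s = ∏ s_i and F spanned
   by b and all these elements, the ideal {t | t s x ∈ F} contains (bD : M) and
   some t_i ∉ m_i for each i, so it lies in no maximal ideal: s x ∈ F. *)

Set Implicit Arguments. Unset Strict Implicit. Unset Printing Implicit Defensive.
Local Open Scope ring_scope.

Section Span.
Import GRing.Theory.
Variables (D : idomainType) (M : lmodType D).
Implicit Types (gs hs : seq M) (x y : M).

Lemma in_span_nil x : in_span [::] x <-> x = 0.
Proof.
split; first by case=> [[|c cs]] [_ ->]; rewrite /= big_nil.
by move->; exists [::]; rewrite big_nil.
Qed.

Lemma in_span_cons g gs x :
  in_span (g :: gs) x <-> exists c y, in_span gs y /\ x = c *: g + y.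
Proof.
split; last first.
  by case=> c [y [[cs [Hs ->]] ->]]; exists (c :: cs); rewrite /= Hs big_cons.
case=> [[|c cs]] [//= [Hs] ->]; rewrite big_cons.
by exists c, (\sum_(p <- zip cs gs) p.1 *: p.2); split; first exists cs.
Qed.

Lemma in_span0 gs : in_span gs 0.
Proof.
elim: gs => [|g gs IH]; first exact/in_span_nil.
by apply/in_span_cons; exists 0, 0; rewrite scale0r addr0.
Qed.

Lemma in_spanD gs x y : in_span gs x -> in_span gs y -> in_span gs (x + y).
Proof.
elim: gs x y => [|g gs IH] x y.
  by move=> /in_span_nil -> /in_span_nil ->; apply/in_span_nil; rewrite addr0.
move=> /in_span_cons[c [x' [Hx ->]]] /in_span_cons[c' [y' [Hy ->]]].
apply/in_span_cons; exists (c + c'), (x' + y').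
by rewrite scalerDl addrACA; split; first exact: IH.
Qed.

Lemma in_spanZ gs (a : D) x : in_span gs x -> in_span gs (a *: x).
Proof.
elim: gs x => [|g gs IH] x.
  by move=> /in_span_nil ->; apply/in_span_nil; rewrite scaler0.
move=> /in_span_cons[c [x' [Hx ->]]]; apply/in_span_cons.
by exists (a * c), (a *: x'); rewrite scalerDr scalerA; split; first exact: IH.
Qed.

Lemma in_span_submodule gs : submodule (in_span gs).
Proof. by split; [exact: in_span0 | exact: in_spanD | exact: in_spanZ]. Qed.

Lemma in_span_mem gs g : List.In g gs -> in_span gs g.
Proof.
elim: gs => [|h gs IH] //= [->|Hg]; apply/in_span_cons.
  by exists 1, 0; rewrite scale1r addr0; split; first exact: in_span0.
by exists 0, g; rewrite scale0r add0r; split; first exact: IH.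
Qed.

Lemma in_span_trans gs hs x :
  (forall g, List.In g gs -> in_span hs g) -> in_span gs x -> in_span hs x.
Proof.
elim: gs x => [|g gs IH] x gs_hs; first by move=> /in_span_nil ->; exact: in_span0.
move=> /in_span_cons[c [y [Hy ->]]].
apply: in_spanD; first by apply/in_spanZ/gs_hs; left.
by apply: IH => // h Hh; apply: gs_hs; right.
Qed.

Lemma in_span_sub gs hs x :
  (forall g, List.In g gs -> List.In g hs) -> in_span gs x -> in_span hs x.
Proof. by move=> gs_hs; apply: in_span_trans => g /gs_hs /in_span_mem. Qed.

Lemma in_span_scale_ideal gs x : is_ideal (fun t : D => in_span gs (t *: x)).
Proof.
split; first by rewrite scale0r; exact: in_span0.
  by move=> a b Ha Hb; rewrite scalerDl; exact: in_spanD.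
by move=> r a Ha; rewrite -scalerA; exact: in_spanZ.
Qed.

End Span.

Section MaximalIdeals.
Import GRing.Theory.
Variable D : idomainType.
Implicit Types (T m : D -> Prop) (a b : D).
Local Open Scope classical_set_scope.

Lemma maximal_ideal_mul m a b : maximal_ideal m -> ~ m a -> ~ m b -> ~ m (a * b).
Proof.
move=> [[m0 mD mM] m1 mmax] ma mb mab.
pose J (z : D) := exists x r, m x /\ z = x + r * a.
have idJ : is_ideal J.
  split; first by exists 0, 0; rewrite mul0r addr0.
    move=> _ _ [x [r [mx ->]]] [y [r' [my ->]]].
    by exists (x + y), (r + r'); rewrite mulrDl addrACA; split; first exact: mD.
  move=> r _ [x [r' [mx ->]]].
  by exists (r * x), (r * r'); rewrite mulrDr mulrA; split; first exact: mM.
have mJ x : m x -> J x by exists x, 0; rewrite mul0r addr0.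
have [[x [r [mx J1]]]|J1] := pselect (J 1).
  apply: mb; have -> : b = b * x + r * (a * b) by rewrite -[b in LHS]mulr1 J1; ring.
  by apply: mD; apply: mM.
by apply/ma/(mmax J idJ mJ J1); exists 0, 1; rewrite mul1r add0r.
Qed.

Lemma is_ideal_chain_union (F : set (set D)) :
  (exists I, F I) -> (forall I, F I -> is_ideal I) -> total_on F subset ->
  is_ideal (\bigcup_(I in F) I).
Proof.
move=> [I0 FI0] Fid Ftot; split; first by exists I0 => //; case: (Fid _ FI0).
  move=> a b [I FI Ia] [J FJ Jb].
  have [IJ|JI] := Ftot _ _ FI FJ.
    by exists J => //; case: (Fid _ FJ) => _ + _; apply; first exact: IJ.
  by exists I => //; case: (Fid _ FI) => _ + _; apply; last exact: JI.
by move=> r a [I FI Ia]; exists I => //; case: (Fid _ FI) => _ _; apply.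
Qed.

Lemma ideal_sub_maximal T : is_ideal T -> ~ T 1 ->
  exists2 m, maximal_ideal m & forall x, T x -> m x.
Proof.
move=> idT T1.
pose P (J : set D) := [/\ is_ideal J, ~ J 1 & forall x, T x -> J x].
pose R (I J : {J | P J}) := `[< forall x, sval I x -> sval J x >].
have PT : P T by split.
have [||F Ftot|[m [idm m1 Tm]] mmax] := ZL_preorder (exist P T PT) (R := R).
- by move=> I; apply/asboolP.
- by move=> I J K /asboolP IJ /asboolP JK; apply/asboolP => x /IJ /JK.
- have [[I0 FI0]|F0] := pselect (exists I, F I); last first.
    by exists (exist P T PT) => I FI; exfalso; apply: F0; exists I.
  pose U := \bigcup_(I in sval @` F) I.
  have PU : P U.
    split.
    + apply: is_ideal_chain_union.
      * by exists (sval I0); exists I0.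
      * by move=> _ [I _ <-]; case: (svalP I).
      * move=> _ _ [I FI <-] [J FJ <-].
        by case: (Ftot I J FI FJ) => /asboolP; [left|right].
    + by case=> _ [I _ <-] I1; case: (svalP I) => _ + _; apply.
    + by move=> x Tx; exists (sval I0); [exists I0 | case: (svalP I0) => _ _; apply].
  by exists (exist P U PU) => I FI; apply/asboolP => x Ix; exists (sval I) => //; exists I.
exists m; last exact: Tm.
split=> // J idJ mJ J1.
have PJ : P J by split=> // x /Tm /mJ.
by apply/asboolP/(mmax (exist P J PJ))/asboolP.
Qed.

End MaximalIdeals.

Section Localization.
Import GRing.Theory.
Variables (D : idomainType) (M : lmodType D) (m : D -> Prop).
Hypothesis max_m : maximal_ideal m.
Implicit Types (L : M -> Prop) (N : M * D -> Prop).

Let m1 : ~ m 1. Proof. by case: max_m. Qed.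
Let mM a b : ~ m a -> ~ m b -> ~ m (a * b) := maximal_ideal_mul max_m.

Lemma frac_eq_sym (p q : M * D) : frac_eq m p q -> frac_eq m q p.
Proof.
by case=> u [mu E]; exists u; split=> //; rewrite -opprB scalerN E oppr0.
Qed.

Lemma loc_submodule_num N x u : loc_submodule m N -> N (x, u) -> N (x, 1).
Proof.
case=> Nden Neq _ _ NZ Nxu; apply: (Neq _ _ (NZ u 1 _ m1 Nxu)) => //.
by exists 1; split=> //; rewrite /= !scale1r mul1r subrr.
Qed.

Lemma contraction_submodule N : loc_submodule m N -> submodule (fun x => N (x, 1)).
Proof.
case=> _ _ N0 ND NZ; split=> //.
  by move=> x y Nx Ny; have := ND _ _ Nx Ny; rewrite /fadd /= !scale1r mulr1.
by move=> a x Nx; have := NZ a 1 _ m1 Nx; rewrite /fscale /= mulr1.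
Qed.

Lemma fsum_common_denominator (cs : seq D) (gs : seq M) u :
  size cs = size gs ->
  let F := fsum [seq fscale cg.1.1 cg.1.2 cg.2
                | cg <- zip [seq (c, u) | c <- cs] [seq (g, 1) | g <- gs]] in
  F.2 = u ^+ size cs /\ u *: F.1 = u ^+ size cs *: \sum_(p <- zip cs gs) p.1 *: p.2.
Proof.
elim: cs gs => [|c cs IH] [|g gs] //= => [_|[/IH [F2 F1]]].
  by rewrite big_nil !scaler0 expr0.
rewrite F2 mulr1 exprS big_cons; split=> //.
by rewrite !scalerDr F1 !scalerA.
Qed.

Lemma loc_in_span_frac (gs : seq M) x u :
  ~ m u -> in_span gs x -> loc_in_span m [seq (g, 1) | g <- gs] (x, u).
Proof.
move=> mu [cs [Hcs ->]]; exists [seq (c, u) | c <- cs].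
split; first by rewrite !size_map.
split; first by move=> _ /List.in_map_iff[c [<- _]].
have [F2 F1] := fsum_common_denominator u Hcs.
by exists 1; split=> //; rewrite scale1r /= F2 F1 subrr.
Qed.

Lemma S_Noetherian_loc (S : D -> Prop) :
  S_Noetherian M S -> loc_S_Noetherian M S m.
Proof.
move=> SN N locN.
have [s [Ss [gs [gsN Hgs]]]] := SN _ (contraction_submodule locN).
exists s; split=> //; exists [seq (g, 1) | g <- gs]; split.
  by move=> _ /List.in_map_iff[g [<- /gsN]].
case=> x u Nxu; rewrite /fscale /= mul1r.
have mu : ~ m u by case: locN => Nden _ _ _ _; exact: Nden Nxu.
exact/(loc_in_span_frac mu)/Hgs/(loc_submodule_num locN Nxu).
Qed.

(* The submodule L_m of M_m, as a set of fraction representatives. *)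
Definition loc_extension L (p : M * D) : Prop :=
  ~ m p.2 /\ exists2 t, ~ m t & L (t *: p.1).

Lemma loc_extension_mono L L' p :
  (forall x, L x -> L' x) -> loc_extension L p -> loc_extension L' p.
Proof. by move=> LL' [mp [t mt /LL' Lt]]; split=> //; exists t. Qed.

Lemma loc_extension_submodule L : submodule L -> loc_submodule m (loc_extension L).
Proof.
case=> L0 LD LZ; split.
- by move=> p [].
- move=> [x u] [y v] [mu [t mt Ltx]] mv [w [mw E]] /=; split=> //.
  exists (t * w * u); first by apply: mM => //; apply: mM.
  have -> : (t * w * u) *: y = (w * v) *: (t *: x).
    move/eqP: E; rewrite /= scalerBr subr_eq0 !scalerA => /eqP E.
    by rewrite -mulrA -scalerA -E !scalerA; congr (_ *: _); ring.
  exact: LZ.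
- by split=> //; exists 1; rewrite ?scaler0.
- move=> [x u] [y v] [mu [t mt Ltx]] [mv [t' mt' Lty]] /=; split; first exact: mM.
  exists (t * t'); first exact: mM.
  have -> : (t * t') *: (v *: x + u *: y) = (t' * v) *: (t *: x) + (t * u) *: (t' *: y).
    by rewrite scalerDr !scalerA; congr (_ *: _ + _ *: _); ring.
  by apply: LD; apply: LZ.
- move=> a u [x v] mu [mv [t mt Ltx]] /=; split; first exact: mM.
  by exists t => //; rewrite scalerA mulrC -scalerA; apply: LZ.
Qed.

Lemma loc_submodule_fsum N (cs : seq (D * D)) (G : seq (M * D)) :
  loc_submodule m N -> (forall g, List.In g G -> N g) ->
  (forall c, List.In c cs -> ~ m c.2) ->
  N (fsum [seq fscale cg.1.1 cg.1.2 cg.2 | cg <- zip cs G]).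
Proof.
case=> _ _ N0 ND NZ; elim: cs G => [|c cs IH] [|g G] //= NG mcs.
apply: ND; first by apply: NZ; [apply: mcs; left | apply: NG; left].
by apply: IH => [h Gh|d csd]; [apply: NG | apply: mcs]; right.
Qed.

Lemma loc_in_span_mem N gs p :
  loc_submodule m N -> (forall g, List.In g gs -> N g) -> ~ m p.2 ->
  loc_in_span m gs p -> N p.
Proof.
move=> locN Ngs mp [cs [_ [mcs /frac_eq_sym Ep]]].
by case: (locN) => _ Neq _ _ _; apply: Neq Ep => //; apply: loc_submodule_fsum.
Qed.

Lemma loc_extension_clear L G :
  (forall g, List.In g G -> loc_extension L g) ->
  exists2 ys, (forall y, List.In y ys -> L y) &
    forall g, List.In g G -> loc_extension (in_span ys) g.
Proof.
elim: G => [|g G IH] LG; first by exists [::].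
have [mg [t mt Ltg]] := LG g (or_introl erefl).
have [ys ysL ysG] := IH (fun h Gh => LG h (or_intror Gh)).
exists (t *: g.1 :: ys) => [y [<-|/ysL]|h [<-|/ysG]] //.
  by split=> //; exists t => //; apply: in_span_mem; left.
by apply: loc_extension_mono => x; apply: in_span_sub => y; right.
Qed.

(* s L_m ⊆ (ys)_m, with denominators cleared. *)
Definition spans_at (s : D) (ys : seq M) L :=
  forall x, L x -> exists2 t, ~ m t & in_span ys (t *: (s *: x)).

Lemma spans_at_widen s r ys ys' L :
  spans_at s ys L -> (forall y, List.In y ys -> List.In y ys') ->
  spans_at (r * s) ys' L.
Proof.
move=> sys ys_ys' x /sys[t mt Ht]; exists t => //.
by rewrite -scalerA scalerA mulrC -scalerA; apply/in_spanZ/(in_span_sub ys_ys').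
Qed.

Lemma loc_S_Noetherian_spans_at (S : D -> Prop) L :
  loc_S_Noetherian M S m -> submodule L ->
  exists2 s, S s & exists2 ys, (forall y, List.In y ys -> L y) & spans_at s ys L.
Proof.
move=> LSN subL.
have [s [Ss [gs [gsN Hgs]]]] := LSN _ (loc_extension_submodule subL).
have [ys ysL ysgs] := loc_extension_clear gsN.
exists s => //; exists ys => // x Lx.
have Nx : loc_extension L (x, 1) by split=> //; exists 1; rewrite ?scale1r.
have [_ [t mt Ht]] : loc_extension (in_span ys) (s *: x, 1).
  apply: (loc_in_span_mem (gs := gs)) => //.
    exact/loc_extension_submodule/in_span_submodule.
  by have := Hgs _ Nx; rewrite /fscale mulr1.
by exists t.
Qed.

End Localization.

Section Globalization.
Import GRing.Theory.
Variables (D : idomainType) (M : lmodType D) (S : D -> Prop).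
Implicit Types (L : M -> Prop) (m : D -> Prop).

Lemma finite_character_cover (a : M) : finite_character M -> a != 0 ->
  exists l : seq (D -> Prop), forall m, maximal_ideal m ->
    (forall d, colon_cyclic a d -> m d) -> List.In m l.
Proof.
move=> FC a0; have [/(FC a a0)[l Hl]|colon1] := pselect (exists d, ~ colon_cyclic a d).
  exists l => m mm /(Hl m mm)[I [lI mI]].
  by have -> : m = I by apply/funext => d; apply/propext.
exists [::] => m [_ m1 _] /(_ 1) m_colon; apply/m1/m_colon.
by apply: contrapT => n1; apply: colon1; exists 1.
Qed.

Lemma spans_at_seq (l : seq (D -> Prop)) L :
  Defs.multiplicative S -> locally_S_Noetherian M S -> submodule L ->
  exists2 s, S s & exists2 ys, (forall y, List.In y ys -> L y) &
    forall m, List.In m l -> maximal_ideal m -> spans_at m s ys L.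
Proof.
move=> [S1 SM] LSN subL; elim: l => [|m l [s Ss [ys ysL Hys]]].
  by exists 1 => //; exists [::].
have [mm|nmm] := pselect (maximal_ideal m); last first.
  by exists s => //; exists ys => // m' [<-|/Hys] //.
have [s' Ss' [ys' ys'L Hys']] := loc_S_Noetherian_spans_at mm (LSN m mm) subL.
exists (s * s'); first exact: SM.
exists (ys' ++ ys) => [y /List.in_app_iff[/ys'L|/ysL]|m' [<- _|/Hys Hm' mm']] //.
  by apply: spans_at_widen Hys' _ => y ys'y; apply/List.in_app_iff; left.
by rewrite mulrC; apply: spans_at_widen (Hm' mm') _ => y ysy; apply/List.in_app_iff; right.
Qed.

Lemma S_finite_of_spans_at L (b : M) (s : D) ys :
  L b -> S s -> (forall y, List.In y ys -> L y) ->
  (forall m, maximal_ideal m -> (forall d, colon_cyclic b d -> m d) ->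
     spans_at m s ys L) ->
  S_finite S L.
Proof.
move=> Lb Ss ysL Hloc; exists s; split=> //; exists (b :: ys); split.
  by move=> g [<-|/ysL].
move=> x Lx; rewrite -[s *: x]scale1r.
pose T t := in_span (b :: ys) (t *: (s *: x)).
have colon_T d : colon_cyclic b d -> T d.
  by move=> /(_ (s *: x))[e]; rewrite /T => ->; apply/in_spanZ/in_span_mem; left.
apply: contrapT => T1.
have [m mm Tm] := ideal_sub_maximal (in_span_scale_ideal (b :: ys) (s *: x)) T1.
have [t mt Ht] := Hloc m mm (fun d cd => Tm d (colon_T d cd)) x Lx.
by apply/mt/Tm; apply: in_span_sub Ht => y; right.
Qed.

Lemma S_Noetherian_locally : S_Noetherian M S -> locally_S_Noetherian M S.
Proof. by move=> SN m mm; exact: S_Noetherian_loc. Qed.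

Lemma S_Noetherian_of_locally :
  Defs.multiplicative S -> locally_S_Noetherian M S ->
  finite_character M -> S_Noetherian M S.
Proof.
move=> mulS LSN FC L subL.
have [[b Lb b0]|L0] := pselect (exists2 b, L b & b != 0); last first.
  exists 1; split; first by case: mulS.
  exists [::]; split=> // x Lx; have -> : x = 0.
    by apply: contrapT => /eqP x0; apply: L0; exists x.
  by rewrite scaler0; exact: in_span0.
have [l Hl] := finite_character_cover FC b0.
have [s Ss [ys ysL Hys]] := spans_at_seq l mulS LSN subL.
apply: (S_finite_of_spans_at Lb Ss ysL) => m mm colon_m.
exact: Hys (Hl m mm colon_m) mm.
Qed.

End Globalization.

Theorem proposition2p4 (D : idomainType) (M : lmodType D) (S : D -> Prop) :
  multiplicative S -> torsion_free M ->
  (S_Noetherian M S -> locally_S_Noetherian M S) /\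
  (locally_S_Noetherian M S -> finite_character M -> S_Noetherian M S).
Proof.
move=> mulS _; split; first exact: S_Noetherian_locally.
exact: S_Noetherian_of_locally.
Qed.
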